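(* Let $d\ge1$, let $n$ be divisible by 4 and sufficiently large with $d=o(\sqrt{n})$. Let $\nu$ be the prefix of length $\frac{n}{4}$ of the infinite binary string $1^1 0^1 1^2 0^2 1^3 0^3\cdots$. Let $x$ be a binary string of length $\frac{n}{4}$ with exactly $d$ ones and $y$ a binary string of length $\frac{n}{4}$ with $\mathsf{HAM}(x,y)=d+1$, and set $s(x,y)=\nu^R\, x\, y^R\, \nu$. Then every substring of $s(x,y)$ that is a $d$-near-palindrome has length at most $200d^2+\frac{n}{2}$.
   Context: $1^k$ and $0^k$ denote $k$ repetitions of the symbol; juxtaposition denotes concatenation; $T^R$ denotes the reverse of $T$. $\mathsf{HAM}(x,y)$ is the number of positions where equal-length strings differ. A string $T$ of length $m$ is a $d$-near-palindrome if $|\{i\in[m]: T[i]\neq T[m+1-i]\}|\le d$. *)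

(* Binary strings are represented as seq bool (true = 1). *)
From mathcomp Require Import all_boot.
Set Implicit Arguments. Unset Strict Implicit. Unset Printing Implicit Defensive.

Definition nu_blocks (k : nat) : seq bool :=
  flatten [seq nseq j true ++ nseq j false | j <- iota 1 k].

(* Prefix of length m of the infinite string 1^1 0^1 1^2 0^2 1^3 0^3 ...
   (nu_blocks m has length m(m+1) >= m, so the prefix is exact). *)
Definition nu_prefix (m : nat) : seq bool := take m (nu_blocks m).

Definition ham (x y : seq bool) : nat := count (fun p => p.1 != p.2) (zip x y).

(* T (length m) is a d-near-palindrome if #{i : T[i] != T[m+1-i]} <= d
   (0-indexed: T[i] vs T[m-1-i]). *)
Definition near_pal (d : nat) (T : seq bool) : bool :=
  count (fun i => nth false T i != nth false T (size T - 1 - i)) (iota 0 (size T)) <= d.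

Definition s_xy (n : nat) (x y : seq bool) : seq bool :=
  rev (nu_prefix (n %/ 4)) ++ x ++ rev y ++ nu_prefix (n %/ 4).

From mathcomp Require Import all_boot zify.
Set Implicit Arguments. Unset Strict Implicit. Unset Printing Implicit Defensive.

(* Write s = nu^R x y^R nu with |nu| = |x| = |y| = m, and let t be a window of
   length L > 2m + 200d^2 of s.  Being a d-near-palindrome, t pairs at most d
   positions with a mirror letter that differs.  As rev s(x,y) = s(y,x), we may
   assume that the centre of t lies D/2 >= 0 to the right of the centre of s.
   - D = 0: the mirror matches x against y, giving ham x y = d+1 mismatches.
   - 0 < D <= 9d: the mirror matches the left copy of nu against the right one
     shifted by D.  A 1 of nu followed at distance D by a 0 occurs at the end of
     the 1-run of every block 1^J 0^J with J >= D, and D times in the block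
     J = D; either way there are d+1 such pairs early enough in nu.
   - D > 9d: the first 8d+4 letters of the right copy of nu, half of them ones,
     are matched against x y^R, which has at most 3d+1 ones. *)

Lemma nu_blocksS k : nu_blocks k.+1 = nu_blocks k ++ nseq k.+1 true ++ nseq k.+1 false.
Proof. by rewrite /nu_blocks -[k.+1]addn1 iotaD map_cat flatten_cat /= cats0 addn1. Qed.

Lemma size_nu_blocks k : size (nu_blocks k) = k * k.+1.
Proof. elim: k => [//|k IH]; rewrite nu_blocksS !size_cat IH !size_nseq; nia. Qed.

Lemma nth_nu_blocks_le k l u : k <= l -> u < size (nu_blocks k) ->
  nth false (nu_blocks l) u = nth false (nu_blocks k) u.
Proof.
move=> /subnKC <- hu; elim: (l - k) => [|i IH]; first by rewrite addn0.
by rewrite addnS nu_blocksS nth_cat IH ifT // size_nu_blocks; rewrite size_nu_blocks in hu; nia.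
Qed.

Lemma size_nu_prefix m : size (nu_prefix m) = m.
Proof. by rewrite size_takel // size_nu_blocks; nia. Qed.

Lemma nth_nu_prefix m k u : u < m -> u < size (nu_blocks k) ->
  nth false (nu_prefix m) u = nth false (nu_blocks k) u.
Proof.
move=> hum huk; rewrite nth_take // -(@nth_nu_blocks_le m (maxn m k)) ?leq_maxl //.
  by rewrite (@nth_nu_blocks_le k) ?leq_maxr.
by rewrite size_nu_blocks; nia.
Qed.

Lemma nth_nu_prefix_one m J r : r <= J -> J * J.+1 + r < m ->
  nth false (nu_prefix m) (J * J.+1 + r) = true.
Proof.
move=> hr hm; rewrite (@nth_nu_prefix _ J.+1) //; last by rewrite size_nu_blocks; nia.
rewrite nu_blocksS nth_cat size_nu_blocks ltnNge leq_addr [~~ true]/= addKn.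
by rewrite nth_cat size_nseq ltnS hr nth_nseq ltnS hr.
Qed.

Lemma nth_nu_prefix_zero m J r : r <= J -> J * J.+1 + J.+1 + r < m ->
  nth false (nu_prefix m) (J * J.+1 + J.+1 + r) = false.
Proof.
move=> hr hm; rewrite (@nth_nu_prefix _ J.+1) //; last by rewrite size_nu_blocks; nia.
rewrite nu_blocksS nth_cat size_nu_blocks -addnA ltnNge leq_addr [~~ true]/= addKn.
by rewrite nth_cat size_nseq ltnNge leq_addr [~~ true]/= addKn nth_nseq if_same.
Qed.

Lemma half_count_nu_blocks k N : N <= size (nu_blocks k) ->
  N <= 2 * count id (take N (nu_blocks k)).
Proof.
elim: k N => [|k IH] N; first by rewrite leqn0 => /eqP ->.
rewrite nu_blocksS size_cat take_cat => hN.
case: ifP => [hlt|/negbT hge]; first by apply: IH; rewrite ltnW.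
have := IH _ (leqnn _); rewrite -leqNgt in hge.
move: hN; rewrite take_size count_cat size_cat !size_nseq take_cat size_nseq => hN hk.
by case: ifP => h; rewrite ?count_cat take_nseq ?count_nseq /=; lia.
Qed.

Lemma count_nth_iota (l : seq bool) N : N <= size l ->
  count (nth false l) (iota 0 N) = count id (take N l).
Proof.
move=> hN; rewrite -[in RHS](mkseq_nth false (take N l)) size_takel // count_map.
by apply: eq_in_count => i; rewrite mem_iota => /andP [_ hi] /=; rewrite nth_take.
Qed.

Lemma half_count_nu_prefix m N : N <= m ->
  N <= 2 * count (nth false (nu_prefix m)) (iota 0 N).
Proof.
move=> hN; rewrite count_nth_iota ?size_nu_prefix // take_takel //.
by apply: half_count_nu_blocks; rewrite size_nu_blocks; nia.
Qed.

Lemma count_iota_inj (P : pred nat) (g : nat -> nat) k b M :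
  {in gtn k &, injective g} -> (forall u, u < k -> b <= g u < b + M) ->
  count (P \o g) (iota 0 k) <= count P (iota b M).
Proof.
move=> ginj gM; rewrite -count_map -!size_filter; apply: uniq_leq_size.
  rewrite filter_uniq // map_inj_in_uniq ?iota_uniq // => u v.
  by rewrite !mem_iota /= !add0n; apply: ginj.
move=> z; rewrite !mem_filter => /andP [Pz /mapP [u]].
by rewrite mem_iota add0n /= => hu ez; rewrite Pz ez mem_iota gM.
Qed.

Lemma count_le_neq T (a b : pred T) s :
  count a s <= count (fun z => a z != b z) s + count b s.
Proof. by elim: s => //= z s IH; case: (a z); case: (b z) => /=; lia. Qed.

Lemma count_iota_all k (Q : pred nat) : (forall u, u < k -> Q u) -> count Q (iota 0 k) = k.
Proof.
move=> h; rewrite -[RHS](size_iota 0 k) -count_predT.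
by apply: eq_in_count => u; rewrite mem_iota add0n => /andP [_ /h].
Qed.

Lemma ham_sym x y : ham x y = ham y x.
Proof. by rewrite /ham; elim: x y => [|a x IH] [|b y] //=; rewrite IH eq_sym. Qed.

Lemma count_le_ham x y : size x = size y -> count id y <= count id x + ham x y.
Proof. by rewrite /ham; elim: x y => [|a x IH] [|b y] //= [/IH]; case: a; case: b => /=; lia. Qed.

Lemma ham_nth x y : size x = size y ->
  ham x y = count (fun i => nth false x i != nth false y i) (iota 0 (size x)).
Proof.
move=> e; rewrite /ham -(mkseq_nth (false, false) (zip x y)) count_map size_zip e minnn.
by apply: eq_in_count => i _ /=; rewrite nth_zip.
Qed.

Definition mismatches (s : seq bool) (a L : nat) : nat :=
  count (fun i => nth false s (a + i) != nth false s (a + (L - 1 - i))) (iota 0 L).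

Lemma near_pal_infix d (s t : seq bool) : infix t s -> near_pal d t ->
  exists2 a, a + size t <= size s & mismatches s a (size t) <= d.
Proof.
move=> /infixP [s1 [s2 ->]] hpal; exists (size s1); first by rewrite !size_cat addnA leq_addr.
apply: leq_trans hpal; apply/eq_leq/eq_in_count => i; rewrite mem_iota => /andP [_ hi] /=.
rewrite add0n in hi; rewrite -!nth_drop drop_size_cat // !nth_cat hi ifT //; lia.
Qed.

Lemma mismatches_rev (s : seq bool) a L : a + L <= size s ->
  mismatches (rev s) (size s - a - L) L = mismatches s a L.
Proof.
move=> haL; apply: eq_in_count => i; rewrite mem_iota => /andP [_ hi] /=.
rewrite !nth_rev; try lia.
by rewrite eq_sym; congr (nth _ _ _ != nth _ _ _); lia.
Qed.

Lemma mismatches_ge (s : seq bool) a L k (p : nat -> nat) :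
  {in gtn k &, injective p} -> (forall u, u < k -> a <= p u < a + L) ->
  count (fun u => nth false s (p u) != nth false s (2 * a + L - 1 - p u)) (iota 0 k)
    <= mismatches s a L.
Proof.
move=> pinj pL; apply: leq_trans (@count_iota_inj _ (fun u => p u - a) _ _ _ _ _).
- apply/eq_leq/eq_in_count => u; rewrite mem_iota => /andP [_ hu] /=.
  by have hpu := pL u hu; congr (nth _ _ _ != nth _ _ _); lia.
- by move=> u v hu hv e; apply: pinj => //; have := pL u hu; have := pL v hv; lia.
- by move=> u hu; have := pL u hu; lia.
Qed.

Definition sxy (m : nat) (x y : seq bool) : seq bool :=
  rev (nu_prefix m) ++ x ++ rev y ++ nu_prefix m.

Lemma rev_sxy m x y : rev (sxy m x y) = sxy m y x.
Proof. by rewrite /sxy !rev_cat !revK !catA. Qed.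

Section Layout.
Variables (m : nat) (x y : seq bool).
Hypotheses (hx : size x = m) (hy : size y = m).

Lemma size_sxy : size (sxy m x y) = 4 * m.
Proof. by rewrite /sxy !size_cat !size_rev size_nu_prefix hx hy; lia. Qed.

Lemma nth_sxy_nuR j : j < m -> nth false (sxy m x y) (m - 1 - j) = nth false (nu_prefix m) j.
Proof.
move=> hj; rewrite nth_cat size_rev size_nu_prefix ifT; last by lia.
by rewrite nth_rev size_nu_prefix; [congr nth; lia | lia].
Qed.

Lemma nth_sxy_mid i : i < 2 * m -> nth false (sxy m x y) (m + i) = nth false (x ++ rev y) i.
Proof.
move=> hi; rewrite -nth_drop -[X in drop X](size_nu_prefix m) -[X in drop X]size_rev.
by rewrite drop_size_cat // catA nth_cat size_cat size_rev hx hy ifT //; lia.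
Qed.

Lemma nth_sxy_x i : i < m -> nth false (sxy m x y) (m + i) = nth false x i.
Proof. by move=> hi; rewrite nth_sxy_mid ?nth_cat ?hx ?hi //; lia. Qed.

Lemma nth_sxy_y i : i < m -> nth false (sxy m x y) (3 * m - 1 - i) = nth false y i.
Proof.
move=> hi; have -> : 3 * m - 1 - i = m + (2 * m - 1 - i) by lia.
rewrite nth_sxy_mid; last by lia.
by rewrite nth_cat hx ifF ?nth_rev ?hy; [congr nth | |]; lia.
Qed.

Lemma nth_sxy_nu j : j < m -> nth false (sxy m x y) (3 * m + j) = nth false (nu_prefix m) j.
Proof.
move=> hj; rewrite -nth_drop.
have -> : 3 * m = size (rev (nu_prefix m) ++ x ++ rev y).
  by rewrite !size_cat !size_rev size_nu_prefix hx hy; lia.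
by rewrite /sxy !catA drop_size_cat.
Qed.

End Layout.

Section Window.
Variables (m d : nat) (x y : seq bool) (a L : nat).
Hypotheses (hx : size x = m) (hy : size y = m).
Notation s := (sxy m x y).
Notation V := (nu_prefix m).

(* The mirror of position p in the window [a, a + L) is 2a + L - 1 - p; below,
   D := 2a + L - 4m is twice the offset of the window's centre from that of s. *)

Lemma ham_le_mismatches_centered : 2 * a + L = 4 * m -> a <= m -> ham x y <= mismatches s a L.
Proof.
move=> hc ha; rewrite ham_nth ?hx ?hy //.
apply: leq_trans (@mismatches_ge _ _ _ _ (fun u => m + u) _ _).
- apply/eq_leq/eq_in_count => i; rewrite mem_iota => /andP [_ hi] /=.
  have -> : 2 * a + L - 1 - (m + i) = 3 * m - 1 - i by lia.
  by rewrite nth_sxy_x ?nth_sxy_y.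
- by move=> u v _ _ /addnI.
- by move=> u hu; lia.
Qed.

Lemma mismatches_nu_shift D k (j : nat -> nat) : 2 * a + L = 4 * m + D ->
  {in gtn k &, injective j} -> (forall u, u < k -> a + j u < m /\ j u + D < m) ->
  (forall u, u < k -> nth false V (j u) != nth false V (j u + D)) ->
  k <= mismatches s a L.
Proof.
move=> hc jinj hj hV.
apply: leq_trans (@mismatches_ge _ _ _ k (fun u => m - 1 - j u) _ _).
- rewrite count_iota_all // => u hu; have [h1 h2] := hj u hu.
  have -> : 2 * a + L - 1 - (m - 1 - j u) = 3 * m + (j u + D) by lia.
  by rewrite nth_sxy_nuR ?nth_sxy_nu ?hV //; lia.
- by move=> u v hu hv e; apply: jinj => //; have := hj u hu; have := hj v hv; lia.
- by move=> u hu; have := hj u hu; lia.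
Qed.

Lemma count_nu_prefix_le_mismatches D N W : 2 * a + L = 4 * m + D ->
  N <= D <= W -> W <= 2 * m -> N <= m -> a + N <= m + D ->
  count (nth false V) (iota 0 N) <= mismatches s a L + count (nth false (x ++ rev y)) (iota 0 W).
Proof.
move=> hc /andP [hND hDW] hW hN haN.
apply: leq_trans (count_le_neq _ (fun u => nth false (x ++ rev y) (D - 1 - u)) _) _.
apply: leq_add.
- apply: leq_trans (@mismatches_ge _ _ _ N (fun u => 3 * m + u) _ _).
  + apply/eq_leq/eq_in_count => u; rewrite mem_iota => /andP [_ hu] /=.
    have -> : 2 * a + L - 1 - (3 * m + u) = m + (D - 1 - u) by lia.
    by rewrite nth_sxy_nu ?nth_sxy_mid //; lia.
  + by move=> u v _ _ /addnI.
  + by move=> u hu; lia.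
- by apply: (@count_iota_inj _ (fun u => D - 1 - u)) => [u v /[!inE] hu hv|u hu] /=; lia.
Qed.

Hypotheses (hd : 0 < d) (hm : 100 * (d * d) <= m).
Hypotheses (haL : a + L <= 4 * m) (hL : 2 * m + 200 * (d * d) < L).

Lemma mismatches_small_shift D : 2 * a + L = 4 * m + D -> 0 < D <= d ->
  d < mismatches s a L.
Proof.
move=> hc /andP [D0 Dd].
have hJ u : u < d.+1 -> (d + u) * (d + u).+1 + (d + u) + D <= 9 * (d * d).
  move=> hu; have : (d + u) * (d + u) <= 4 * (d * d) by nia.
  nia.
apply: (@mismatches_nu_shift D d.+1 (fun u => (d + u) * (d + u).+1 + (d + u))) => //.
- move=> u v /[!inE] hu hv e; nia.
- by move=> u /hJ hu; split; nia.
- move=> u /hJ hu; rewrite nth_nu_prefix_one //; last by lia.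
  have -> : (d + u) * (d + u).+1 + (d + u) + D
          = (d + u) * (d + u).+1 + (d + u).+1 + D.-1 by lia.
  by rewrite nth_nu_prefix_zero //; lia.
Qed.

Lemma mismatches_large_shift D : 2 * a + L = 4 * m + D -> d < D <= 9 * d ->
  d < mismatches s a L.
Proof.
move=> hc /andP [dD D9]; have [J eJ] : exists J, D = J.+1 by exists D.-1; lia.
have hJ : J * J.+1 + J.+1 + d < 91 * (d * d) by nia.
apply: (@mismatches_nu_shift D d.+1 (fun u => J * J.+1 + u)) => //.
- by move=> u v _ _ /addnI.
- by move=> u hu; split; nia.
- move=> u hu; rewrite nth_nu_prefix_one; [|lia|nia].
  by rewrite eJ -addnA [u + _]addnC addnA nth_nu_prefix_zero //; lia.
Qed.

Lemma mismatches_sxy_gt_right : 4 * m <= 2 * a + L ->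
  count id x <= 2 * d + 1 -> count id x + count id y <= 3 * d + 1 -> ham x y = d.+1 ->
  d < mismatches s a L.
Proof.
move=> hc cx cxy hxy.
have [D hD] : exists D, 2 * a + L = 4 * m + D by exists (2 * a + L - 4 * m); lia.
case: (posnP D) => [D0|D0].
  by rewrite -hxy ham_le_mismatches_centered //; lia.
case: (leqP D d) => [Dd|dD]; first by apply: (mismatches_small_shift hD); rewrite D0.
case: (leqP D (9 * d)) => [D9|D9]; first by apply: (mismatches_large_shift hD); rewrite dD.
have hM : size (x ++ rev y) = 2 * m by rewrite size_cat size_rev hx hy; lia.
(* At least N/2 ones among the first N letters of nu, at most 2d+1 (resp. 3d+1)
   ones in the part of x y^R they face: N = 6d+4 (resp. 8d+4) leaves d+1. *)
case: (leqP D m) => [Dm|Dm].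
- have := @half_count_nu_prefix m (6 * d + 4) ltac:(nia).
  have := @count_nu_prefix_le_mismatches D (6 * d + 4) m hD
    ltac:(lia) ltac:(lia) ltac:(nia) ltac:(nia).
  rewrite (@count_nth_iota (x ++ rev y)) ?hM ?take_size_cat //; lia.
- have := @half_count_nu_prefix m (8 * d + 4) ltac:(nia).
  have := @count_nu_prefix_le_mismatches D (8 * d + 4) (2 * m) hD
    ltac:(lia) ltac:(lia) ltac:(nia) ltac:(nia).
  rewrite (@count_nth_iota (x ++ rev y)) -hM ?take_size ?count_cat ?count_rev //; lia.
Qed.

End Window.

Lemma mismatches_sxy_gt m d x y a L : size x = m -> size y = m ->
  0 < d -> 100 * (d * d) <= m ->
  count id x <= 2 * d + 1 -> count id y <= 2 * d + 1 -> count id x + count id y <= 3 * d + 1 ->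
  ham x y = d.+1 -> a + L <= 4 * m -> 2 * m + 200 * (d * d) < L ->
  d < mismatches (sxy m x y) a L.
Proof.
move=> hx hy hd hm cx cy cxy hxy haL hL.
case: (leqP (4 * m) (2 * a + L)) => hc; first exact: mismatches_sxy_gt_right.
rewrite -mismatches_rev size_sxy // rev_sxy.
by apply: mismatches_sxy_gt_right; rewrite 1?ham_sym //; lia.
Qed.

Theorem lemma7p2 :
  exists K N : nat, forall n d : nat,
    N <= n -> 4 %| n -> 1 <= d -> K * (d * d) <= n ->
    forall x y : seq bool,
      size x = n %/ 4 -> count id x = d ->
      size y = n %/ 4 -> ham x y = d.+1 ->
      forall t : seq bool, infix t (s_xy n x y) -> near_pal d t ->
        size t <= 200 * (d * d) + n %/ 2.
Proof.
exists 400, 0 => n d _ /dvdnP [m ->] hd hK x y.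
have hs : s_xy (m * 4) x y = sxy m x y by rewrite /s_xy mulnK.
rewrite hs (mulnK m (isT : 0 < 4)) => hx cx hy hxy t ht hpal.
have [a] := near_pal_infix ht hpal; rewrite size_sxy // => haL hmis.
have cy : count id y <= count id x + ham x y by apply: count_le_ham; rewrite hx hy.
have -> : m * 4 %/ 2 = 2 * m by rewrite -(mulnK (2 * m) (isT : 0 < 2)); congr divn; lia.
rewrite leqNgt; apply/negP => hL.
have := @mismatches_sxy_gt m d x y a (size t) hx hy hd; lia.
Qed.
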